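(* Let $q\ge3$ be a prime power and let $P\subseteq[0,q-2]^n$ be an integral convex polytope which contains, up to a unimodular affine transformation, either a lattice segment of length $2$ (the points $0,e_1,2e_1$ and the segment joining them) or the unit square $[0,1]^2\times\{0\}$. Set $P_0=P$ and $P_{k+1}=P_k*P_k$ for $k\ge0$, and let $\delta_k=\delta(P_k)$. Then $\delta_{k+1}=\min\{\delta_k,\ 2\delta_k-\delta_k^2\frac{q}{q-1}\}$ for all $k\ge0$, and $\delta_k=\delta_2$ for all $k\ge2$.
   Context: The join of $P\subseteq\mathbb{R}^n$ and $Q\subseteq\mathbb{R}^m$ is $P*Q=\mathrm{conv}\big(\{(p,\mathbf{0}^m,0):p\in P\}\cup\{(\mathbf{0}^n,y,1):y\in Q\}\big)\subseteq\mathbb{R}^{n+m+1}$; thus $P_k\subseteq[0,q-2]^{n_k}$ with $n_0=n$, $n_{k+1}=2n_k+1$. For an integral convex polytope $P\subseteq[0,q-2]^n$: $\mathcal{L}_P=\mathrm{span}_{\mathbb{F}_q}\{x^p: p\in P\cap\mathbb{Z}^n\}$, $N(P)=\max_{0\neq f\in\mathcal{L}_P}|Z(f)|$ with $Z(f)$ the zero set of $f$ in $(\mathbb{F}_q^\times)^n$, and $\delta(P)=\big((q-1)^n-N(P)\big)/(q-1)^n$. *)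

From HB Require Import structures.
From mathcomp Require Import all_boot all_order all_algebra.
From mathcomp Require Import boolp Rstruct.

Set Implicit Arguments.
Unset Strict Implicit.
Unset Printing Implicit Defensive.

Import Order.TTheory GRing.Theory Num.Theory.
Local Open Scope ring_scope.

Definition region (n : nat) := 'rV[Rdefinitions.R]_n -> Prop.

Definition conv (n : nat) (S : region n) : region n :=
  fun x => exists (k : nat) (v : 'I_k -> 'rV[Rdefinitions.R]_n) (w : 'I_k -> Rdefinitions.R),
    [/\ forall i, S (v i), forall i, 0 <= w i,
        \sum_i w i = 1 & x = \sum_i w i *: v i].

Definition integral_polytope (n : nat) (P : region n) : Prop :=
  exists (k : nat) (v : 'I_k -> 'rV[int]_n),
    forall x, P x <-> conv (fun y => exists i, y = map_mx (fun z : int => z%:~R) (v i)) x.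

Definition in_box (n : nat) (b : nat) (P : region n) : Prop :=
  forall x, P x -> forall i, 0 <= x 0 i <= b%:R.

Definition join (n m : nat) (P : region n) (Q : region m) : region (n + m + 1) :=
  conv (fun z =>
         (exists p, P p /\ z = row_mx (row_mx p 0) 0)
      \/ (exists y, Q y /\ z = row_mx (row_mx 0 y) (const_mx 1))).

Fixpoint dimk (n k : nat) : nat :=
  match k with 0 => n | k'.+1 => dimk n k' + dimk n k' + 1 end.

Fixpoint Pk (n : nat) (P : region n) (k : nat) : region (dimk n k) :=
  match k return region (dimk n k) with
  | 0 => P
  | k'.+1 => join (@Pk n P k') (@Pk n P k')
  end.
Arguments Pk {n} P k.

(* The k-th standard basis vector e_{k+1} of R^n (0-indexed k). *)
Definition stdvec (n k : nat) : 'rV[Rdefinitions.R]_n := \row_j ((j : nat) == k)%:R.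

Definition uaff (n : nat) (A : 'M[int]_n) (b : 'rV[int]_n) (x : 'rV[Rdefinitions.R]_n) : 'rV[Rdefinitions.R]_n :=
  x *m map_mx (fun z : int => z%:~R) A + map_mx (fun z : int => z%:~R) b.

Definition contains_segment2 (n : nat) (P : region n) : Prop :=
  (0 < n)%N /\ exists (A : 'M[int]_n) (b : 'rV[int]_n), A \in unitmx /\
    forall t : Rdefinitions.R, 0 <= t <= 2 -> P (uaff A b (t *: stdvec n 0)).

Definition contains_square (n : nat) (P : region n) : Prop :=
  (1 < n)%N /\ exists (A : 'M[int]_n) (b : 'rV[int]_n), A \in unitmx /\
    forall s t : Rdefinitions.R, 0 <= s <= 1 -> 0 <= t <= 1 ->
      P (uaff A b (s *: stdvec n 0 + t *: stdvec n 1)).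

Section Code.
Variable F : finFieldType.

Definition qm1 : nat := #|F|.-1.

(* Candidate exponent vectors: points of {0, ..., q-2}^n. *)
Definition expo (n : nat) := {ffun 'I_n -> 'I_qm1}.

Definition latpt (n : nat) (P : region n) (e : expo n) : bool :=
  `[< P (\row_i ((e i : nat)%:R)) >].

Definition monom (n : nat) (e : expo n) (x : {ffun 'I_n -> F}) : F :=
  \prod_i x i ^+ (e i : nat).

Definition evalL (n : nat) (P : region n) (c : {ffun expo n -> F})
    (x : {ffun 'I_n -> F}) : F :=
  \sum_(e | latpt P e) c e * monom e x.

(* f is nonzero as a polynomial: some coefficient on a lattice point is nonzero
   (the monomials x^p are distinct, hence linearly independent). *)
Definition nonzeroL (n : nat) (P : region n) (c : {ffun expo n -> F}) : bool :=
  [exists e, latpt P e && (c e != 0)].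

Definition zeroset (n : nat) (P : region n) (c : {ffun expo n -> F}) :=
  [set x : {ffun 'I_n -> F} | [forall i, x i != 0] && (evalL P c x == 0)].

Definition NP (n : nat) (P : region n) : nat :=
  \max_(c : {ffun expo n -> F} | nonzeroL P c) #|zeroset P c|.

Definition deltaP (n : nat) (P : region n) : rat :=
  (((qm1 ^ n)%:R - (NP P)%:R) / (qm1 ^ n)%:R)%R.

End Code.

(* A lattice point of P * P is either (p, 0, 0) or (0, p, 1) with p a lattice point of P,
   so every f in L_{P*P} reads g(x) + t h(y) with g, h in L_P.  For fixed (x, y) in the
   torus, the number of t <> 0 with g(x) + t h(y) = 0 is q - 1 if g(x) = h(y) = 0, at most
   1 if both are non-zero, and 0 otherwise.  Summing, |Z(f)| <= (q-1) N(P) (q-1)^n as soon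
   as (q-1)^n <= (q-1) N(P), and h = 0 attains the bound; thus N(P*P) = (q-1)^(n+1) N(P),
   i.e. delta(P*P) = delta(P), and the hypothesis (q-1)^n <= (q-1) N(P) propagates.
   It holds for P itself: the segment (or square) yields lattice points e0, e1 of P with
   e1 - e0 primitive, and x^e1 - x^e0 vanishes on the fibre over 1 of x |-> x^(e1 - e0),
   whose q - 1 fibres are translates of one another.  So delta_k = delta_0 <= (q-2)/(q-1),
   which is exactly when the minimum in the recursion is attained by delta_k. *)

From HB Require Import structures.
From mathcomp Require Import all_boot all_order all_algebra.
From mathcomp Require Import boolp Rstruct.
From mathcomp Require Import zify ring lra.
Set Implicit Arguments.
Unset Strict Implicit.
Unset Printing Implicit Defensive.

Import Order.TTheory GRing.Theory Num.Theory.
Local Open Scope ring_scope.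

Local Notation RR := Rdefinitions.R.

Definition convex (m : nat) (S : region m) := forall x, conv S x -> S x.

Section ConvexHull.
Variable m : nat.
Implicit Types (S : region m) (x : 'rV[RR]_m).

Lemma conv_sub S x : S x -> conv S x.
Proof.
move=> Sx; exists 1%N, (fun _ => x), (fun _ => 1); split => //.
- by rewrite big_ord1.
- by rewrite big_ord1 scale1r.
Qed.

Lemma conv_mono S S' x : (forall y, S y -> S' y) -> conv S x -> conv S' x.
Proof. by move=> SS' [k [v [w [Sv w0 w1 ->]]]]; exists k, v, w; split => // i; apply: SS'. Qed.

Lemma conv_finsum S (I : finType) (v : I -> 'rV[RR]_m) (w : I -> RR) :
  (forall i, S (v i)) -> (forall i, 0 <= w i) -> \sum_i w i = 1 ->
  conv S (\sum_i w i *: v i).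
Proof.
move=> Sv w0 w1.
exists #|I|, (fun j => v (enum_val j)), (fun j => w (enum_val j)); split => //.
- by rewrite -w1 -(big_enum_val (A := I)); apply: eq_bigl => i; rewrite inE.
- rewrite -(big_enum_val (A := I) (fun i => w i *: v i)).
  by apply: eq_bigl => i; rewrite inE.
Qed.

(* Zero-weight points need not lie in [S]: swap them for a point of positive weight. *)
Lemma conv_finsum_supp S (I : finType) (v : I -> 'rV[RR]_m) (w : I -> RR) :
  (forall i, w i != 0 -> S (v i)) -> (forall i, 0 <= w i) -> \sum_i w i = 1 ->
  conv S (\sum_i w i *: v i).
Proof.
move=> Sv w0 w1.
have /existsP [i0 wi0] : [exists i, w i != 0].
  apply: contraT; rewrite negb_exists => /forallP w_eq0.
  by move: w1; rewrite big1 => [/esym/eqP|i _]; [rewrite oner_eq0 | apply/eqP/negPn/w_eq0].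
have -> : \sum_i w i *: v i = \sum_i w i *: (if w i == 0 then v i0 else v i).
  by apply: eq_bigr => i _; case: eqP => // ->; rewrite !scale0r.
by apply: conv_finsum => // i; case: ifP => [_|/negbT]; apply: Sv.
Qed.

Lemma convex_conv S : convex (conv S).
Proof.
move=> x [k [v [w [Sv w0 w1 ->]]]].
have /choice [f Hf] : forall i : 'I_k,
    exists t : {kk : nat & (('I_kk -> 'rV[RR]_m) * ('I_kk -> RR))%type},
    [/\ forall j, S ((tagged t).1 j), forall j, 0 <= (tagged t).2 j,
        \sum_j (tagged t).2 j = 1 & v i = \sum_j (tagged t).2 j *: (tagged t).1 j].
  move=> i; case: (Sv i) => kk [s [u [H1 H2 H3 H4]]].
  by exists (Tagged (fun kk => (('I_kk -> 'rV[RR]_m) * ('I_kk -> RR))%type) (s, u)).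
pose J (i : 'I_k) := 'I_(tag (f i)).
pose u i (j : J i) := w i * (tagged (f i)).2 j.
have -> : \sum_i w i *: v i = \sum_i \sum_(j : J i) u i j *: (tagged (f i)).1 j.
  apply: eq_bigr => i _; case: (Hf i) => _ _ _ ->.
  by rewrite scaler_sumr; apply: eq_bigr => j _; rewrite scalerA.
rewrite (sig_big_dep (fun _ => true) (fun _ _ => true)
  (fun i (j : J i) => u i j *: (tagged (f i)).1 j)) /=.
apply: conv_finsum.
- by move=> p; case: (Hf (tag p)).
- by move=> p; case: (Hf (tag p)) => _ H _ _; rewrite mulr_ge0.
- rewrite -(sig_big_dep (fun _ => true) (fun _ _ => true) u) /= -w1.
  by apply: eq_bigr => i _; case: (Hf i) => _ _ H _; rewrite -mulr_sumr H mulr1.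
Qed.

Lemma conv_eq a x : conv (eq^~ a) x -> x = a.
Proof.
case=> k [v [w [va _ w1 ->]]].
by rewrite (eq_bigr (fun i => w i *: a)) => [|i _]; rewrite ?va // -scaler_suml w1 scale1r.
Qed.

Lemma conv_linear (p : nat) (f : {linear 'rV[RR]_m -> 'rV[RR]_p}) S (S' : region p) x :
  (forall y, S y -> S' (f y)) -> conv S x -> conv S' (f x).
Proof.
move=> SS' [k [v [w [Sv w0 w1 ->]]]]; exists k, (f \o v), w; split => //=.
- by move=> i; apply: SS'.
- by rewrite linear_sum; apply: eq_bigr => i _; rewrite linearZ.
Qed.

Lemma coord_affine_convex_comb (I : finType) (w : I -> RR) (v : I -> 'rV[RR]_m) i a b :
  \sum_j w j = 1 -> a * (\sum_j w j *: v j) 0 i + b = \sum_j w j * (a * v j 0 i + b).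
Proof.
move=> w1; transitivity (\sum_j (a * (w j *: v j) 0 i + w j * b)).
  by rewrite big_split /= -mulr_suml w1 mul1r summxE mulr_sumr.
by apply: eq_bigr => j _; rewrite mxE; ring.
Qed.

Lemma conv_affine_ge0 S i a b x :
  (forall y, S y -> 0 <= a * y 0 i + b) -> conv S x -> 0 <= a * x 0 i + b.
Proof.
move=> Sge0 [k [v [w [Sv w0 w1 ->]]]]; rewrite coord_affine_convex_comb //.
by apply: sumr_ge0 => j _; rewrite mulr_ge0 ?Sge0.
Qed.

Lemma conv_face S i a b x :
  (forall y, S y -> 0 <= a * y 0 i + b) -> conv S x -> a * x 0 i + b = 0 ->
  conv (fun y => S y /\ a * y 0 i + b = 0) x.
Proof.
move=> Sge0 [k [v [w [Sv w0 w1 ->]]]]; rewrite coord_affine_convex_comb // => sum0.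
have term0 j : w j * (a * v j 0 i + b) = 0.
  by apply: (psumr_eq0P _ sum0) => // l _; rewrite mulr_ge0 ?Sge0.
apply: conv_finsum_supp => // j wj0; split => //.
by move/eqP: (term0 j); rewrite mulf_eq0 (negbTE wj0) => /eqP.
Qed.

End ConvexHull.

Lemma integral_polytope_convex (n : nat) (P : region n) : integral_polytope P -> convex P.
Proof.
case=> k [V HP] x Cx; apply/HP; apply: convex_conv.
by apply: conv_mono Cx => y /HP.
Qed.

Lemma Pk_convex (n : nat) (P : region n) k : convex P -> convex (Pk P k).
Proof. by case: k => [|k] //= _; apply: convex_conv. Qed.

Section JoinCoordinates.
Variables n m : nat.
Local Notation N := (n + m + 1)%N.

Definition lidx (i : 'I_n) : 'I_N := lshift 1 (lshift m i).
Definition ridx (j : 'I_m) : 'I_N := lshift 1 (rshift n j).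
Definition tidx : 'I_N := rshift (n + m) ord0.

Lemma join_ord_cases (C : 'I_N -> Prop) :
  (forall i, C (lidx i)) -> (forall j, C (ridx j)) -> C tidx -> forall k, C k.
Proof.
move=> Cl Cr Ct k; rewrite -[k]splitK; case: (split k) => [k'|t] /=.
  by rewrite -[k']splitK; case: (split k') => [i|j]; [apply: Cl | apply: Cr].
by rewrite (ord1 t).
Qed.

Variable A : Type.

Definition lblk (x : {ffun 'I_N -> A}) : {ffun 'I_n -> A} := [ffun i => x (lidx i)].
Definition rblk (x : {ffun 'I_N -> A}) : {ffun 'I_m -> A} := [ffun j => x (ridx j)].
Definition glue (a : {ffun 'I_n -> A}) (b : {ffun 'I_m -> A}) (t : A) : {ffun 'I_N -> A} :=
  [ffun k => match split k with
             | inl k' => match split k' with inl i => a i | inr j => b j end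
             | inr _ => t end].

Lemma glue_lidx a b t i : glue a b t (lidx i) = a i.
Proof. by rewrite ffunE /lidx !(unsplitK (inl _)). Qed.
Lemma glue_ridx a b t j : glue a b t (ridx j) = b j.
Proof. by rewrite ffunE /ridx (unsplitK (inl _)) (unsplitK (inr _)). Qed.
Lemma glue_tidx a b t : glue a b t tidx = t.
Proof. by rewrite ffunE /tidx (unsplitK (inr _)). Qed.

Lemma lblk_glue a b t : lblk (glue a b t) = a.
Proof. by apply/ffunP => i; rewrite ffunE glue_lidx. Qed.
Lemma rblk_glue a b t : rblk (glue a b t) = b.
Proof. by apply/ffunP => j; rewrite ffunE glue_ridx. Qed.

Lemma glueK x : glue (lblk x) (rblk x) (x tidx) = x.
Proof.
apply/ffunP; apply: join_ord_cases => [i|j|].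
- by rewrite glue_lidx ffunE.
- by rewrite glue_ridx ffunE.
- by rewrite glue_tidx.
Qed.

End JoinCoordinates.
Arguments lidx {n m}. Arguments ridx {n m}. Arguments tidx {n m}.
Arguments lblk {n m A}. Arguments rblk {n m A}. Arguments glue {n m A}.

Section JoinGeometry.
Variables (n m : nat) (P : region n) (Q : region m).

Definition join_gen : region (n + m + 1) := fun z =>
     (exists p, P p /\ z = row_mx (row_mx p 0) 0)
  \/ (exists y, Q y /\ z = row_mx (row_mx 0 y) (const_mx 1)).

Lemma join_gen_height z : join_gen z -> z 0 tidx = 0 \/ z 0 tidx = 1.
Proof. by case=> [[p [_ ->]]|[y [_ ->]]]; [left|right]; rewrite row_mxEr mxE. Qed.

Lemma join_height_le1 z : join P Q z -> z 0 tidx <= 1.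
Proof.
move=> Jz; rewrite -subr_ge0 addrC -mulN1r.
apply: conv_affine_ge0 Jz => y /join_gen_height [] ->; lra.
Qed.

Lemma join_height0 z : join P Q z -> z 0 tidx = 0 ->
  conv P (lsubmx (lsubmx z)) /\ rsubmx (lsubmx z) = 0.
Proof.
move=> Jz z0.
have face : conv (fun y => join_gen y /\ 1 * y 0 tidx + 0 = 0) z.
  by apply: conv_face Jz _ => [y /join_gen_height [] ->|]; rewrite ?z0; lra.
have low y : join_gen y /\ 1 * y 0 tidx + 0 = 0 ->
    P (lsubmx (lsubmx y)) /\ rsubmx (lsubmx y) = 0.
  case=> [[[p [Pp ->]]|[q [_ ->]]]]; first by rewrite !row_mxKl row_mxKr.
  by rewrite row_mxEr mxE mul1r addr0 => /eqP; rewrite oner_eq0.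
split.
- by apply: (conv_linear (f := lsubmx \o lsubmx) _ face) => y /low [].
- by apply: conv_eq; apply: (conv_linear (f := rsubmx \o lsubmx) _ face) => y /low [].
Qed.

Lemma join_height1 z : join P Q z -> z 0 tidx = 1 ->
  conv Q (rsubmx (lsubmx z)) /\ lsubmx (lsubmx z) = 0.
Proof.
move=> Jz z1.
have face : conv (fun y => join_gen y /\ -1 * y 0 tidx + 1 = 0) z.
  by apply: conv_face Jz _ => [y /join_gen_height [] ->|]; rewrite ?z1; lra.
have high y : join_gen y /\ -1 * y 0 tidx + 1 = 0 ->
    Q (rsubmx (lsubmx y)) /\ lsubmx (lsubmx y) = 0.
  case=> [[[p [_ ->]]|[q [Qq ->]]]]; last by rewrite row_mxKl row_mxKr row_mxKl.
  by rewrite row_mxEr mxE mulN1r oppr0 add0r => /eqP; rewrite oner_eq0.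
split.
- by apply: (conv_linear (f := rsubmx \o lsubmx) _ face) => y /high [].
- by apply: conv_eq; apply: (conv_linear (f := lsubmx \o lsubmx) _ face) => y /high [].
Qed.

End JoinGeometry.

Section JoinLattice.
Variable F : finFieldType.
Local Notation T := (qm1 F).
Hypothesis T_gt1 : (1 < T)%N.

Definition o0 : 'I_T := Ordinal (ltnW T_gt1).
Definition o1 : 'I_T := Ordinal T_gt1.
Definition ezero (k : nat) : expo F k := [ffun _ => o0].

Definition pt (k : nat) (e : expo F k) : 'rV[RR]_k := \row_i ((e i : nat)%:R).

Lemma pt_ezero k : pt (ezero k) = 0.
Proof. by apply/rowP => i; rewrite !mxE ffunE. Qed.

Lemma pt_eq0 k (e : expo F k) : pt e = 0 -> e = ezero k.
Proof.
move/rowP => e0; apply/ffunP => i; apply/val_inj/eqP.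
by have := e0 i; rewrite !mxE ffunE => /eqP; rewrite pnatr_eq0.
Qed.

Variables (n m : nat) (P : region n) (Q : region m).

Lemma pt_join (e : expo F (n + m + 1)) :
  pt e = row_mx (row_mx (pt (lblk e)) (pt (rblk e))) (const_mx ((e tidx : nat)%:R)).
Proof.
apply/rowP; apply: join_ord_cases => [i|j|]; rewrite /pt mxE.
- by rewrite /lidx !row_mxEl mxE ffunE.
- by rewrite /ridx row_mxEl row_mxEr mxE ffunE.
- by rewrite /tidx row_mxEr mxE.
Qed.

Definition join_lowpt (e : expo F (n + m + 1)) :=
  [&& e tidx == o0, rblk e == ezero m & latpt P (lblk e)].
Definition join_highpt (e : expo F (n + m + 1)) :=
  [&& e tidx == o1, lblk e == ezero n & latpt Q (rblk e)].

Lemma latpt_join : convex P -> convex Q ->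
  forall e, latpt (join P Q) e = join_lowpt e || join_highpt e.
Proof.
move=> cP cQ e; rewrite /latpt -/(pt e); apply/asboolP/idP => [Je|]; last first.
  case/orP => /and3P [/eqP t /eqP b /asboolP a]; apply: conv_sub; rewrite pt_join t b pt_ezero.
  - by left; exists (pt (lblk e)); split=> //; congr row_mx; apply/rowP => i; rewrite !mxE.
  - by right; exists (pt (rblk e)); split=> //; congr row_mx; apply/rowP => i; rewrite !mxE.
have height : pt e 0 tidx = (e tidx : nat)%:R by rewrite mxE.
have [t0|t1] : e tidx = o0 \/ e tidx = o1.
  have := join_height_le1 Je; rewrite height lern1.
  by case: (e tidx) => [[|[|]] ?] //= _; [left|right]; apply/val_inj.
- have h0 : pt e 0 tidx = 0 by rewrite height t0.
  have [Pl r0] := join_height0 Je h0.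
  rewrite pt_join !row_mxKl in Pl; rewrite pt_join row_mxKl row_mxKr in r0.
  apply/orP; left; rewrite /join_lowpt t0 (pt_eq0 r0) !eqxx /=.
  by apply/asboolP; apply: cP.
- have h1 : pt e 0 tidx = 1 by rewrite height t1.
  have [Qr l0] := join_height1 Je h1.
  rewrite pt_join row_mxKl row_mxKr in Qr; rewrite pt_join !row_mxKl in l0.
  apply/orP; right; rewrite /join_highpt t1 (pt_eq0 l0) !eqxx /=.
  by apply/asboolP; apply: cQ.
Qed.

End JoinLattice.

Section JoinCode.
Variable F : finFieldType.
Hypothesis T_gt1 : (1 < qm1 F)%N.
Variables (n m : nat) (P : region n) (Q : region m).
Hypotheses (cP : convex P) (cQ : convex Q).
Local Notation N := (n + m + 1)%N.
Local Notation o0 := (o0 T_gt1).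
Local Notation o1 := (o1 T_gt1).
Local Notation ezero := (ezero T_gt1).

Definition lowexp (p : expo F n) : expo F N := glue p (ezero m) o0.
Definition highexp (p : expo F m) : expo F N := glue (ezero n) p o1.
Definition lowcoef (c : {ffun expo F N -> F}) : {ffun expo F n -> F} := [ffun p => c (lowexp p)].
Definition highcoef (c : {ffun expo F N -> F}) : {ffun expo F m -> F} :=
  [ffun p => c (highexp p)].

Lemma monom_join (e : expo F N) (x : {ffun 'I_N -> F}) :
  monom e x = monom (lblk e) (lblk x) * monom (rblk e) (rblk x) * x tidx ^+ e tidx.
Proof.
rewrite /monom big_split_ord big_split_ord big_ord1 /=.
by congr (_ * _ * _); apply: eq_bigr => i _; rewrite !ffunE.
Qed.

Lemma monom_ezero k (y : {ffun 'I_k -> F}) : monom (ezero k) y = 1.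
Proof. by rewrite /monom big1 // => i _; rewrite ffunE expr0. Qed.

Lemma evalL_join c x :
  evalL (join P Q) c x = evalL P (lowcoef c) (lblk x) + x tidx * evalL Q (highcoef c) (rblk x).
Proof.
rewrite /evalL (eq_bigl (fun e => join_lowpt T_gt1 P e || join_highpt T_gt1 Q e));
  last exact: latpt_join.
rewrite (bigID (join_lowpt T_gt1 P)) /=.
congr (_ + _).
- rewrite (eq_bigl (join_lowpt T_gt1 P)) => [|e]; last by apply: andb_idl => ->.
  rewrite (reindex_onto lowexp lblk) => [|e /and3P [/eqP t /eqP r _]];
    last by rewrite /lowexp -t -r glueK.
  apply: eq_big => [p|p _].
    by rewrite /join_lowpt /lowexp glue_tidx lblk_glue rblk_glue !eqxx andbT.
  by rewrite ffunE monom_join /lowexp lblk_glue rblk_glue glue_tidx monom_ezero !mulr1.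
- rewrite (eq_bigl (join_highpt T_gt1 Q)) => [|e]; last first.
    rewrite /join_lowpt /join_highpt; have [->|t1] := eqVneq (e tidx) o1.
      by rewrite (_ : o1 == o0 = false) ?andbT.
    by rewrite /= orbF andbN.
  rewrite mulr_sumr (reindex_onto highexp rblk) => [|e /and3P [/eqP t /eqP l _]];
    last by rewrite /highexp -t -l glueK.
  apply: eq_big => [p|p _].
    by rewrite /join_highpt /highexp glue_tidx lblk_glue rblk_glue !eqxx andbT.
  rewrite ffunE monom_join /highexp lblk_glue rblk_glue glue_tidx monom_ezero.
  by rewrite mul1r (_ : (o1 : nat) = 1%N) // expr1 mulrA mulrC.
Qed.

Lemma nonzeroL_join c :
  nonzeroL (join P Q) c = nonzeroL P (lowcoef c) || nonzeroL Q (highcoef c).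
Proof.
apply/existsP/orP => [[e /andP []]|].
  rewrite (latpt_join T_gt1 cP cQ) => /orP [] /and3P [/eqP t /eqP b lat] ce.
  + by left; apply/existsP; exists (lblk e); rewrite lat ffunE /lowexp -t -b glueK.
  + by right; apply/existsP; exists (rblk e); rewrite lat ffunE /highexp -t -b glueK.
case=> /existsP [p /andP [lat]]; rewrite ffunE => cp.
+ exists (lowexp p); rewrite cp andbT (latpt_join T_gt1 cP cQ); apply/orP; left.
  by rewrite /join_lowpt /lowexp glue_tidx lblk_glue rblk_glue !eqxx.
+ exists (highexp p); rewrite cp andbT (latpt_join T_gt1 cP cQ); apply/orP; right.
  by rewrite /join_highpt /highexp glue_tidx lblk_glue rblk_glue !eqxx.
Qed.

End JoinCode.

Lemma card_sumb (I : finType) (A : {set I}) : #|A| = (\sum_x (x \in A : nat))%N.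
Proof. by rewrite -sum1_card big_mkcond /=; apply: eq_bigr => x _; case: ifP. Qed.

Section TorusCounting.
Variable F : finFieldType.
Local Notation T := (qm1 F).

Definition torus k := [set x : {ffun 'I_k -> F} | [forall i, x i != 0]].

Lemma card_torus k : #|torus k| = (T ^ k)%N.
Proof.
have -> : #|torus k| = #|[set f : {ffun 'I_k -> F} | f \in ffun_on (predC1 (0 : F))]|.
  apply: eq_card => x; rewrite !inE.
  by apply/forallP/ffun_onP => H i; have := H i; rewrite ?inE.
by rewrite cardsE card_ffun_on cardC1 card_ord.
Qed.

Definition nzroots (u v : F) := #|[set z : F | (z != 0) && (u + z * v == 0)]|.

Lemma nzroots_r0 (u : F) : nzroots u 0 = ((u == 0)%R * T)%N.
Proof.
rewrite /nzroots; have [->|u0] := eqVneq u 0.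
  rewrite mul1n /qm1 -(cardC1 (0 : F)) cardsE; apply: eq_card => z.
  by rewrite !inE unfold_in /= mulr0 addr0 eqxx andbT.
apply/eqP; rewrite mul0n cards_eq0; apply/eqP/setP => z.
by rewrite !inE mulr0 addr0 (negbTE u0) andbF.
Qed.

Lemma nzroots_le (u v : F) :
  (nzroots u v <= (u == 0)%R * (v == 0)%R * T + (u != 0)%R * (v != 0)%R)%N.
Proof.
have [->|v0] := eqVneq v 0.
  by rewrite nzroots_r0 /= !(mul0n, muln0, mul1n, muln1, addn0, add0n).
have [->|u0] := eqVneq u 0.
  rewrite /nzroots leqn0 cards_eq0; apply/eqP/setP => z.
  by rewrite !inE add0r mulf_eq0 (negbTE v0) orbF andNb.
rewrite /= mul0n add0n muln1 /nzroots.
rewrite (leq_trans (subset_leq_card (_ : _ \subset [set - u / v]))) ?cards1 //.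
apply/subsetP => z; rewrite !inE => /andP [_ /eqP uzv]; apply/eqP.
by apply: (mulIf v0); rewrite divfK //; apply/eqP; rewrite -addr_eq0 addrC uzv.
Qed.

Section ZeroCounts.
Variable k : nat.
Implicit Type g : {ffun 'I_k -> F} -> F.

Definition zcount g := (\sum_(a in torus k) (g a == 0)%R)%N.
Definition nzcount g := (\sum_(a in torus k) (g a != 0)%R)%N.

Lemma zcount_add_nzcount g : (zcount g + nzcount g = T ^ k)%N.
Proof.
rewrite -big_split /= -card_torus -sum1_card.
by apply: eq_bigr => a _; case: (g a == 0).
Qed.

End ZeroCounts.

Variables n m : nat.
Local Notation N := (n + m + 1)%N.
Implicit Types (g : {ffun 'I_n -> F} -> F) (h : {ffun 'I_m -> F} -> F).

Lemma torus_glue a b t :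
  [forall k, @glue n m F a b t k != 0] =
  [&& [forall i, a i != 0], [forall j, b j != 0] & t != 0].
Proof.
apply/forallP/and3P => [nz|[/forallP a0 /forallP b0 t0]].
- split; [apply/forallP => i; have := nz (lidx i); rewrite glue_lidx
        | apply/forallP => j; have := nz (ridx j); rewrite glue_ridx
        | have := nz tidx; rewrite glue_tidx] => //.
- by apply: join_ord_cases => [i|j|]; rewrite ?glue_lidx ?glue_ridx ?glue_tidx.
Qed.

Lemma card_zeros_join g h :
  #|[set x in torus N | g (lblk x) + x tidx * h (rblk x) == 0]|
  = (\sum_(a in torus n) \sum_(b in torus m) nzroots (g a) (h b))%N.
Proof.
rewrite card_sumb (reindex (fun u : ({ffun 'I_n -> F} * {ffun 'I_m -> F}) * F =>
  glue u.1.1 u.1.2 u.2)) /=; last first.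
  exists (fun x => ((lblk x, rblk x), x tidx)) => [[[a b] t] _|x _] /=.
    by rewrite lblk_glue rblk_glue glue_tidx.
  exact: glueK.
set S := [set x in torus N | _].
transitivity (\sum_a \sum_b \sum_t (glue a b t \in S : nat))%N.
  by rewrite pair_big /= pair_big /=; apply: eq_big => // [[[a b] t]].
rewrite [RHS]big_mkcond; apply: eq_bigr => a _ /=; rewrite inE.
case: ifP => a0; last first.
  by rewrite big1 // => b _; rewrite big1 // => t _; rewrite !inE torus_glue a0.
rewrite [RHS]big_mkcond; apply: eq_bigr => b _ /=; rewrite inE.
case: ifP => b0; last first.
  by rewrite big1 // => t _; rewrite !inE torus_glue a0 b0.
rewrite /nzroots card_sumb; apply: eq_bigr => t _.
by rewrite !inE torus_glue a0 b0 lblk_glue rblk_glue glue_tidx.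
Qed.

Lemma sum_nzroots_le g h :
  (\sum_(a in torus n) \sum_(b in torus m) nzroots (g a) (h b)
    <= T * zcount g * zcount h + nzcount g * nzcount h)%N.
Proof.
apply: (@leq_trans (\sum_(a in torus n) \sum_(b in torus m)
    ((g a == 0)%R * (h b == 0)%R * T + (g a != 0)%R * (h b != 0)%R))%N).
  by apply: leq_sum => a _; apply: leq_sum => b _; apply: nzroots_le.
rewrite /zcount /nzcount -mulnA !big_distrl /= big_distrr -big_split /=.
apply: leq_sum => a _; rewrite !big_distrr -big_split /=.
by apply: leq_sum => b _; rewrite mulnC mulnA.
Qed.

Lemma sum_nzroots_r0 g :
  (\sum_(a in torus n) \sum_(b in torus m) nzroots (g a) 0%R = T * zcount g * T ^ m)%N.
Proof.
rewrite /zcount -card_torus big_distrr big_distrl /=; apply: eq_bigr => a _.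
rewrite -sum1_card big_distrr /=; apply: eq_bigr => b _.
by rewrite nzroots_r0 muln1 mulnC.
Qed.

End TorusCounting.

Section MaxZeros.
Variables (F : finFieldType) (n : nat) (P : region n).
Local Notation T := (qm1 F).
Implicit Type c : {ffun expo F n -> F}.

Lemma card_zeroset c : #|zeroset P c| = zcount (evalL P c).
Proof.
rewrite -sum1_card /zcount big_mkcond [RHS]big_mkcond /=; apply: eq_bigr => a _.
by rewrite !inE; case: [forall i, a i != 0] => //=; case: (_ == 0).
Qed.

Lemma NP_le_torus : (NP F P <= T ^ n)%N.
Proof.
apply/bigmax_leqP => c _; rewrite -card_torus; apply: subset_leq_card.
by apply/subsetP => x; rewrite !inE => /andP [].
Qed.

Lemma card_zeroset_le c : nonzeroL P c -> (#|zeroset P c| <= NP F P)%N.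
Proof. exact: (@leq_bigmax_cond _ (nonzeroL P) (fun c => #|zeroset P c|)). Qed.

Lemma zcount_evalL_le c :
  (zcount (evalL P c) <= NP F P)%N \/ nzcount (evalL P c) = 0%N.
Proof.
have [nz|z] := boolP (nonzeroL P c); first by left; rewrite -card_zeroset card_zeroset_le.
right; rewrite /nzcount big1 // => a _; rewrite /evalL big1 ?eqxx // => e le.
have /negPn/eqP -> : ~~ (c e != 0) by apply: contra z => ce; apply/existsP; exists e; rewrite le.
by rewrite mul0r.
Qed.

Lemma NP_attained : (0 < NP F P)%N ->
  exists2 c : {ffun expo F n -> F}, nonzeroL P c & #|zeroset P c| = NP F P.
Proof.
case: (pickP (fun c : {ffun expo F n -> F} => nonzeroL P c)) => [c0 nz0|none] NP_gt0; last first.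
  by move: NP_gt0; rewrite /NP big_pred0.
have pos : (0 < #|[pred c : {ffun expo F n -> F} | nonzeroL P c]|)%N.
  by apply/card_gt0P; exists c0.
have [c nz max] := @eq_bigmax_cond _ _ (fun c => #|zeroset P c|) pos.
by exists c; [rewrite inE in nz | rewrite /NP -max].
Qed.

End MaxZeros.

Local Close Scope ring_scope.

(* A, A' (resp. B, B') count the zeros and non-zeros of g (resp. h) on a torus of size D:
   A <= N unless g = 0, in which case A' = 0; likewise for h; and g, h are not both 0. *)
Lemma count_bound_arith (T N D A A' B B' : nat) :
  A + A' = D -> B + B' = D -> D <= T * N ->
  (A <= N \/ A' = 0) -> (B <= N \/ B' = 0) -> (A <= N \/ B <= N) ->
  T * A * B + A' * B' <= T * N * D.
Proof.
move=> AD BD DTN A_le B_le AB_le.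
have one_side X X' Y Y' : X + X' = D -> Y + Y' = D -> X <= N -> (Y <= N \/ Y' = 0) ->
    T * X * Y + X' * Y' <= T * N * D.
  move=> XD YD X_le [Y_le|->].
    have : X' * Y' <= X' * (T * N) by apply: leq_mul => //; lia.
    have : T * X * Y <= T * X * N by apply: leq_mul.
    have : T * X * N + X' * (T * N) = T * N * D by rewrite -XD; lia.
    lia.
  have : T * X * Y <= T * N * Y by apply: leq_mul => //; apply: leq_mul.
  lia.
case: AB_le => [A_le'|B_le']; first exact: one_side.
by rewrite mulnAC [A' * B']mulnC; apply: one_side.
Qed.

Local Open Scope ring_scope.

Section NPJoin.
Variable F : finFieldType.
Local Notation T := (qm1 F).
Hypothesis T_gt1 : (1 < T)%N.
Variables (n m : nat) (P : region n) (Q : region m).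
Hypotheses (cP : convex P) (cQ : convex Q).

Lemma NP_join_ge : (T * NP F P * T ^ m <= NP F (join P Q))%N.
Proof.
have [|NP_gt0] := posnP (NP F P); first by move=> ->; rewrite muln0 mul0n.
have [c1 nz1 max1] := NP_attained NP_gt0.
pose c : {ffun expo F (n + m + 1) -> F} :=
  [ffun e : expo F (n + m + 1) => if e tidx == o0 T_gt1 then c1 (lblk e) else 0].
have low : lowcoef T_gt1 c = c1.
  by apply/ffunP => p; rewrite ffunE /c ffunE /lowexp glue_tidx eqxx lblk_glue.
have high : highcoef T_gt1 c = 0.
  by apply/ffunP => p; rewrite ffunE /c ffunE /highexp glue_tidx ffunE.
have nzc : nonzeroL (join P Q) c by rewrite (nonzeroL_join T_gt1 cP cQ) low nz1.
apply: leq_trans (card_zeroset_le nzc).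
rewrite -max1 card_zeroset -(sum_nzroots_r0 m) -(card_zeros_join _ (fun=> 0)).
apply/eq_leq/eq_card => x; rewrite !inE (evalL_join T_gt1 cP cQ) low high.
by rewrite [evalL Q 0 _]big1 ?mulr0 // => e _; rewrite ffunE mul0r.
Qed.

Lemma NP_join_le : (T ^ n <= T * NP F P)%N -> (NP F (join P P) <= T * NP F P * T ^ n)%N.
Proof.
move=> base; apply/bigmax_leqP => c nzc.
pose g := evalL P (lowcoef T_gt1 c); pose h := evalL P (highcoef T_gt1 c).
have -> : #|zeroset (join P P) c| =
    #|[set x in torus F _ | g (lblk x) + x tidx * h (rblk x) == 0]|.
  by apply: eq_card => x; rewrite !inE (evalL_join T_gt1 cP cP).
rewrite card_zeros_join; apply: leq_trans (sum_nzroots_le g h) _.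
apply: count_bound_arith (zcount_add_nzcount g) (zcount_add_nzcount h) base
  (zcount_evalL_le _ _) (zcount_evalL_le _ _) _.
move: nzc; rewrite (nonzeroL_join T_gt1 cP cP).
by case/orP => /card_zeroset_le; rewrite card_zeroset; [left|right].
Qed.

End NPJoin.

Lemma NP_join (F : finFieldType) (n : nat) (P : region n) :
  (1 < qm1 F)%N -> convex P -> (qm1 F ^ n <= qm1 F * NP F P)%N ->
  NP F (join P P) = (qm1 F * NP F P * qm1 F ^ n)%N.
Proof.
move=> T_gt1 cP base; apply/eqP; rewrite eqn_leq NP_join_le //.
exact: NP_join_ge.
Qed.

Section Fibers.
Variables (F : finFieldType) (n : nat).
Local Notation T := (qm1 F).

Lemma monom_mul (e : expo F n) (x y : {ffun 'I_n -> F}) :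
  monom e [ffun i => x i * y i] = monom e x * monom e y.
Proof. by rewrite /monom -big_split; apply: eq_bigr => i _; rewrite ffunE exprMn. Qed.

Lemma monom_neq0 (e : expo F n) x : x \in torus F n -> monom e x != 0.
Proof. by rewrite inE => /forallP x0; apply/prodf_neq0 => i _; rewrite expf_neq0. Qed.

Lemma monom_powz (e : expo F n) (c : F) (u : 'I_n -> int) : c != 0 ->
  monom e [ffun i => c ^ u i] = c ^ (\sum_i u i * (e i : nat)%:Z).
Proof.
move=> c0; rewrite /monom (big_morph (fun z => c ^ z) (fun x y => expfzDr x y c0) (expr0z c)).
by apply: eq_bigr => i _; rewrite ffunE -exprz_exp.
Qed.

Variables (e0 e1 : expo F n) (u : 'I_n -> int).
Hypothesis primitive : \sum_i ((e1 i : nat)%:Z - (e0 i : nat)%:Z) * u i = 1.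

Definition fiber (c : F) := [set x in torus F n | monom e1 x == c * monom e0 x].

Lemma fiber_shift (c : F) : c != 0 ->
  exists2 y, y \in torus F n & monom e1 y = c * monom e0 y.
Proof.
move=> c0; exists [ffun i => c ^ u i].
  by rewrite inE; apply/forallP => i; rewrite ffunE expfz_neq0.
rewrite !monom_powz //; have -> : \sum_i u i * (e1 i : nat)%:Z = 1 + \sum_i u i * (e0 i : nat)%:Z.
  by rewrite -primitive -big_split; apply: eq_bigr => i _ /=; ring.
by rewrite expfzDr // expr1z.
Qed.

(* Multiplying by a point of [fiber c^-1] maps [fiber c] injectively into [fiber 1]. *)
Lemma card_fiber_le c : c != 0 -> (#|fiber c| <= #|fiber 1%R|)%N.
Proof.
move=> c0; have [y y_tor y_fib] := fiber_shift (invr_neq0 c0).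
move: (y_tor); rewrite inE => /forallP y0.
pose f (x : {ffun 'I_n -> F}) : {ffun 'I_n -> F} := [ffun i => x i * y i].
have f_inj : injective f.
  by move=> x1 x2 /ffunP f12; apply/ffunP => i; have := f12 i; rewrite !ffunE => /mulIf; apply.
rewrite -(card_imset _ f_inj); apply/subset_leq_card/subsetP => _ /imsetP [x + ->].
rewrite !inE => /andP [/forallP x0 /eqP x_fib]; apply/andP; split.
  by apply/forallP => i; rewrite ffunE mulf_neq0.
by rewrite !monom_mul x_fib y_fib mul1r mulrACA mulfV // mul1r.
Qed.

Lemma card_torus_le_fiber1 : (T ^ n <= T * #|fiber 1%R|)%N.
Proof.
have fiber_partition : (T ^ n = \sum_(c : F | c != 0%R) #|fiber c|)%N.
  rewrite -card_torus card_sumb (eq_bigr (fun c => \sum_x (x \in fiber c : nat))%N);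
    last by move=> c _; rewrite card_sumb.
  rewrite exchange_big /=; apply: eq_bigr => x _.
  have [x_tor|x_tor] := boolP (x \in torus F n); last first.
    by rewrite big1 // => c _; rewrite inE (negbTE x_tor).
  rewrite (bigD1 (monom e1 x / monom e0 x)) /=; last first.
    by rewrite mulf_neq0 ?invr_neq0 ?monom_neq0.
  rewrite inE x_tor divfK ?monom_neq0 // eqxx big1 // => c /andP [_ /negbTE c_ne].
  rewrite inE x_tor /=; case: eqP => // x_fib.
  by rewrite x_fib mulfK ?monom_neq0 ?eqxx in c_ne.
rewrite fiber_partition /qm1 -(cardC1 (0 : F)) -sum_nat_const (eq_bigl (predC1 0)) //.
by apply: leq_sum => c; apply: card_fiber_le.
Qed.

End Fibers.

Section PrimitivePair.
Variables (F : finFieldType) (n : nat) (P : region n).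
Local Notation T := (qm1 F).
Variables (e0 e1 : expo F n) (u : 'I_n -> int).
Hypotheses (lat0 : latpt P e0) (lat1 : latpt P e1).
Hypothesis primitive : \sum_i ((e1 i : nat)%:Z - (e0 i : nat)%:Z) * u i = 1.

Lemma primitive_neq : e1 != e0.
Proof.
apply: contra_eqN primitive => /eqP ->.
by rewrite big1 ?(eq_sym 0) ?oner_eq0 // => i _; rewrite subrr mul0r.
Qed.

(* The zeros of x^e1 - x^e0 on the torus form [fiber 1]. *)
Lemma card_torus_le_NP : (T ^ n <= T * NP F P)%N.
Proof.
pose c : {ffun expo F n -> F} := [ffun e => (e == e1)%:R - (e == e0)%:R].
have evalL_c x : evalL P c x = monom e1 x - monom e0 x.
  rewrite /evalL (bigD1 e1) // (bigD1 e0) /=; last by rewrite lat0 eq_sym primitive_neq.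
  rewrite big1 => [|e /andP [/andP [_ ne1] ne0]]; last first.
    by rewrite ffunE (negbTE ne1) (negbTE ne0) subrr mul0r.
  rewrite !ffunE !eqxx (negbTE primitive_neq) eq_sym (negbTE primitive_neq) /=.
  by rewrite subr0 sub0r mul1r mulN1r addr0.
have nzc : nonzeroL P c.
  apply/existsP; exists e1; rewrite lat1 ffunE eqxx (negbTE primitive_neq) subr0.
  exact: oner_neq0.
apply: (leq_trans (card_torus_le_fiber1 primitive)); rewrite leq_mul2l.
apply/orP; right; apply: leq_trans (card_zeroset_le nzc); apply/subset_leq_card/subsetP => x.
by rewrite !inE => /andP [-> /eqP x_fib]; rewrite evalL_c x_fib mul1r subrr eqxx.
Qed.

End PrimitivePair.

Local Notation intpt w := (map_mx (fun z : int => (z%:~R : RR)) w).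

Section UnimodularEdge.
Variables (n : nat) (P : region n).

Lemma uaff_stdvec (A : 'M[int]_n) (b : 'rV[int]_n) (i : 'I_n) :
  uaff A b (stdvec n i) = intpt (row i A + b).
Proof.
apply/rowP => j; rewrite /uaff !mxE (bigD1 i) //= big1 => [|k ki]; last first.
  by rewrite !mxE (_ : (k : nat) == i = false) ?mul0r //; apply/negbTE.
by rewrite !mxE eqxx mul1r addr0 intrD.
Qed.

Lemma uaff0 (A : 'M[int]_n) (b : 'rV[int]_n) : uaff A b 0 = intpt b.
Proof. by rewrite /uaff mul0mx add0r. Qed.

Lemma unimodular_row_primitive (A : 'M[int]_n) (b : 'rV[int]_n) (i : 'I_n) :
  A \in unitmx -> \sum_j ((row i A + b) 0 j - b 0 j) * invmx A j i = 1.
Proof.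
move=> A_unit; move/matrixP: (mulmxV A_unit) => /(_ i i); rewrite !mxE eqxx mulr1n => <-.
by apply: eq_bigr => j _; rewrite !mxE addrK.
Qed.

Lemma unimodular_edge : contains_segment2 P \/ contains_square P ->
  exists w0 w1 : 'rV[int]_n, exists u : 'I_n -> int,
    [/\ P (intpt w0), P (intpt w1) & \sum_j (w1 0 j - w0 0 j) * u j = 1].
Proof.
move=> P_edge.
suff [A [b [i [A_unit]]]] : exists (A : 'M[int]_n) (b : 'rV[int]_n) (i : 'I_n),
    [/\ A \in unitmx, P (uaff A b 0) & P (uaff A b (stdvec n i))].
  rewrite uaff0 uaff_stdvec => P0 P1.
  by exists b, (row i A + b), (fun j => invmx A j i); split; rewrite ?unimodular_row_primitive.
case: P_edge => [[n_gt0 [A [b [A_unit seg]]]]|[n_gt1 [A [b [A_unit sq]]]]].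
- exists A, b, (Ordinal n_gt0); split => //.
  + by rewrite -(scale0r (stdvec n 0)); apply: seg; lra.
  + by rewrite -[stdvec n _]scale1r; apply: seg; lra.
- exists A, b, (Ordinal (ltnW n_gt1)); split => //.
  + by have := sq 0 0; rewrite !scale0r addr0; apply; lra.
  + by have := sq 1 0; rewrite scale0r scale1r addr0; apply; lra.
Qed.

End UnimodularEdge.

Section BoxLattice.
Variable F : finFieldType.
Hypothesis T_gt1 : (1 < qm1 F)%N.
Variables (n : nat) (P : region n).
Hypothesis P_box : in_box (#|F| - 2) P.

Lemma box_latpt (w : 'rV[int]_n) : P (intpt w) ->
  exists2 e : expo F n, latpt P e & forall i, (e i : nat)%:Z = w 0 i.
Proof.
move=> Pw; have w_range i : 0 <= w 0 i /\ (absz (w 0%R i) < qm1 F)%N.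
  have := P_box Pw i; rewrite mxE ler0z => /andP [w0 w_le]; split => //.
  move: w_le; rewrite [(_ - 2)%:R]pmulrn ler_int -(gez0_abs w0) lez_nat /qm1 => w_le.
  by apply: leq_ltn_trans w_le _; move: T_gt1; rewrite /qm1; lia.
have eE i : ((insubd (o0 T_gt1) (absz (w 0 i)) : 'I_(qm1 F)) : nat)%:Z = w 0 i.
  by rewrite val_insubd (w_range i).2 abszE ger0_norm ?(w_range i).1.
exists [ffun i => insubd (o0 T_gt1) (absz (w 0 i))]; last by move=> i; rewrite ffunE eE.
apply/asboolP; rewrite [X in P X](_ : _ = intpt w) //.
by apply/rowP => i; rewrite !mxE ffunE -[in RHS](eE i).
Qed.

End BoxLattice.

Lemma primitive_latpt_pair (F : finFieldType) (n : nat) (P : region n) :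
  (1 < qm1 F)%N -> in_box (#|F| - 2) P -> contains_segment2 P \/ contains_square P ->
  exists e0 e1 : expo F n, exists u : 'I_n -> int,
    [/\ latpt P e0, latpt P e1 & \sum_i ((e1 i : nat)%:Z - (e0 i : nat)%:Z) * u i = 1].
Proof.
move=> T_gt1 P_box /unimodular_edge [w0 [w1 [u [P0 P1 prim]]]].
have [e0 lat0 e0E] := box_latpt T_gt1 P_box P0.
have [e1 lat1 e1E] := box_latpt T_gt1 P_box P1.
by exists e0, e1, u; split => //; rewrite -prim; apply: eq_bigr => i _; rewrite e0E e1E.
Qed.

Section IteratedJoins.
Variable F : finFieldType.
Local Notation T := (qm1 F).
Hypothesis T_gt1 : (1 < T)%N.
Variables (n : nat) (P : region n).
Hypotheses (cP : convex P) (base : (T ^ n <= T * NP F P)%N).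

Lemma NP_Pk_bound k : (T ^ dimk n k <= T * NP F (Pk P k))%N.
Proof.
elim: k => [|k IH] //=; rewrite NP_join //; last exact: Pk_convex.
by rewrite expnD expn1 expnD mulnC leq_mul2l leq_mul2r IH !orbT.
Qed.

Lemma NP_Pk_succ k : NP F (Pk P k.+1) = (T * NP F (Pk P k) * T ^ dimk n k)%N.
Proof. by rewrite /= NP_join //; [apply: Pk_convex | apply: NP_Pk_bound]. Qed.

Lemma deltaP_Pk k : deltaP F (Pk P k) = deltaP F P.
Proof.
elim: k => [|k <-] //; rewrite /deltaP NP_Pk_succ /= expnD expn1 expnD !natrM.
have T0 : (T%:R : rat) != 0 by rewrite pnatr_eq0 -lt0n ltnW.
have Td0 : ((T ^ dimk n k)%:R : rat) != 0 by rewrite pnatr_eq0 -lt0n expn_gt0 ltnW.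
by field; rewrite T0 Td0.
Qed.

End IteratedJoins.

Lemma deltaP_min_eq (F : finFieldType) (n : nat) (P : region n) :
  (1 < qm1 F)%N -> (qm1 F ^ n <= qm1 F * NP F P)%N ->
  Num.min (deltaP F P) (2 * deltaP F P - deltaP F P ^+ 2 * (#|F|%:R / (#|F|.-1)%:R))
  = deltaP F P.
Proof.
move=> T_gt1 base; apply: min_l.
rewrite /deltaP -/(qm1 F) (_ : #|F| = (qm1 F).+1); last by move: T_gt1; rewrite /qm1; lia.
set T := qm1 F; set D := (T ^ n)%N; set N := NP F P.
have D_gt0 : (0 : rat) < D%:R by rewrite ltr0n expn_gt0 ltnW.
have T_gt0 : (0 : rat) < T%:R by rewrite ltr0n ltnW.
have N_le : (N%:R : rat) <= D%:R by rewrite ler_nat NP_le_torus.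
have D_le : (D%:R : rat) <= T%:R * N%:R by rewrite -natrM ler_nat.
set x : rat := (D%:R - N%:R) / D%:R.
have x_ge0 : 0 <= x by rewrite /x divr_ge0 ?subr_ge0 // ltW.
have x_le : x * (T.+1%:R / T%:R) <= 1.
  have -> : x * (T.+1%:R / T%:R) = ((D%:R - N%:R) * (T%:R + 1)) / (D%:R * T%:R).
    by rewrite /x -addn1 natrD; field; rewrite !lt0r_neq0.
  rewrite ler_pdivrMr ?mulr_gt0 //; nra.
move: x_le; set c := _ / _; nra.
Qed.

Theorem mainTheorem10 (F : finFieldType) (n : nat) (P : region n) :
  (3 <= #|F|)%N ->
  integral_polytope P ->
  in_box (#|F| - 2) P ->
  contains_segment2 P \/ contains_square P ->
  (forall k : nat,
     deltaP F (Pk P k.+1) =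
     Num.min (deltaP F (Pk P k))
       (2 * deltaP F (Pk P k)
        - deltaP F (Pk P k) ^+ 2 * ((#|F|%:R : rat) / (#|F|.-1)%:R))) /\
  (forall k : nat, (2 <= k)%N -> deltaP F (Pk P k) = deltaP F (Pk P 2)).
Proof.
move=> q_ge3 P_poly P_box P_edge.
have T_gt1 : (1 < qm1 F)%N by rewrite /qm1; lia.
have cP := integral_polytope_convex P_poly.
have [e0 [e1 [u [lat0 lat1 prim]]]] := primitive_latpt_pair T_gt1 P_box P_edge.
have base := card_torus_le_NP lat0 lat1 prim.
have delta_const k := deltaP_Pk T_gt1 cP base k.
split=> [k|k _]; last by rewrite !delta_const.
by rewrite !delta_const deltaP_min_eq.
Qed.
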